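(* Let $(X,(f_n))$ be a complex situation such that $f_m(f_n(x))=f_m(x)$ whenever $m<n$ and both sides are defined. Then $\{(2^\omega,\mathbb{G}_0),(X,A^f),(X,(A^f)^{-1})\}$ is a $\preceq^{inj}_B$-antichain, i.e., its members are pairwise $\preceq^{inj}_B$-incomparable.
   Context: For a sequence $(f_n)$ of partial functions, $A^f:=\bigcup_n\mathrm{Graph}(f_n)$. A complex situation is a pair $(X,(f_n)_{n\in\omega})$ where $X$ is a nonempty Polish space, each $f_n$ is a partial continuous open map on $X$ whose domain and range are open in $X$, and $\Delta(X)\subseteq\overline{A^f}\setminus A^f$. $(X,A)\preceq^{inj}_B(Y,B)$ means there is an injective Borel $h:X\to Y$ with $A\subseteq(h\times h)^{-1}(B)$. Let $\psi:\omega\to 2^{<\omega}$ be the bijection enumerating finite binary sequences by length and then lexicographically; $s_n:=\psi(n)0^{n-|\psi(n)|}$ and $\mathbb{G}_0:=\{(s_n0\gamma,s_n1\gamma):n\in\omega,\gamma\in2^\omega\}$. *)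

From Stdlib Require Import Reals Lra Lia Arith List.
Open Scope R_scope.

Definition Polish {X : Type} (O : (X -> Prop) -> Prop) : Prop :=
  exists d : X -> X -> R,
    (forall x y, 0 <= d x y) /\
    (forall x y, d x y = 0 <-> x = y) /\
    (forall x y, d x y = d y x) /\
    (forall x y z, d x z <= d x y + d y z) /\
    (forall U : X -> Prop,
        O U <-> (forall x, U x -> exists eps, 0 < eps /\
                   forall y, d x y < eps -> U y)) /\
    (forall s : nat -> X,
        (forall eps, 0 < eps -> exists N, forall m n,
            (N <= m)%nat -> (N <= n)%nat -> d (s m) (s n) < eps) ->
        exists l, forall eps, 0 < eps -> exists N, forall n,
            (N <= n)%nat -> d (s n) l < eps) /\
    (exists D : nat -> X, forall x eps, 0 < eps -> exists n, d x (D n) < eps).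

Inductive Borel {X : Type} (O : (X -> Prop) -> Prop) : (X -> Prop) -> Prop :=
| Borel_open : forall U, O U -> Borel O U
| Borel_compl : forall U, Borel O U -> Borel O (fun x => ~ U x)
| Borel_union : forall F : nat -> X -> Prop,
    (forall n, Borel O (F n)) -> Borel O (fun x => exists n, F n x)
| Borel_ext : forall U V, (forall x, U x <-> V x) -> Borel O U -> Borel O V.

Definition Borel_map {X Y : Type} (OX : (X -> Prop) -> Prop)
  (OY : (Y -> Prop) -> Prop) (h : X -> Y) : Prop :=
  forall B, Borel OY B -> Borel OX (fun x => B (h x)).

Definition inj_Borel_le {X Y : Type}
  (OX : (X -> Prop) -> Prop) (A : X -> X -> Prop)
  (OY : (Y -> Prop) -> Prop) (B : Y -> Y -> Prop) : Prop :=
  exists h : X -> Y,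
    Borel_map OX OY h /\ (forall x x', h x = h x' -> x = x') /\
    (forall x x', A x x' -> B (h x) (h x')).

(** * Complex situations.
   A partial map f_n is given by its domain [D n] and a total function
   [f n] whose values outside [D n] are irrelevant. *)

Definition graph_union {X : Type} (D : nat -> X -> Prop) (f : nat -> X -> X)
  : X -> X -> Prop :=
  fun x y => exists n, D n x /\ f n x = y.

Definition closure2 {X : Type} (O : (X -> Prop) -> Prop) (A : X -> X -> Prop)
  (x y : X) : Prop :=
  forall U V, O U -> O V -> U x -> V y -> exists a b, U a /\ V b /\ A a b.

Definition complex_situation {X : Type} (O : (X -> Prop) -> Prop)
  (D : nat -> X -> Prop) (f : nat -> X -> X) : Prop :=
  Polish O /\ inhabited X /\
  (forall n, O (D n)) /\
  (forall n, O (fun y => exists x, D n x /\ f n x = y)) /\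
  (forall n V, O V -> O (fun x => D n x /\ V (f n x))) /\
  (forall n U, O U -> O (fun y => exists x, D n x /\ U x /\ f n x = y)) /\
  (forall x, closure2 O (graph_union D f) x x /\ ~ graph_union D f x x).

Definition cantor := nat -> bool.

Definition cantor_open (U : cantor -> Prop) : Prop :=
  forall x, U x -> exists N, forall y,
      (forall i, (i < N)%nat -> y i = x i) -> U y.

(* psi n = binary expansion of n+1 with its leading 1 removed; this
   enumerates 2^{<omega} by length and then lexicographically. *)
Definition psi (n : nat) : list bool :=
  let k := Nat.log2 (S n) in
  map (fun i => Nat.testbit (S n) (k - 1 - i)) (seq 0 k).

Definition s_seq (n : nat) : list bool :=
  psi n ++ repeat false (n - length (psi n)).

Definition concat_seq (s : list bool) (b : bool) (g : cantor) : cantor :=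
  fun i => if Nat.ltb i (length s) then nth i s false
           else if Nat.eqb i (length s) then b
           else g (i - S (length s))%nat.

Definition G0 (x y : cantor) : Prop :=
  exists n (g : cantor), x = concat_seq (s_seq n) false g /\
                         y = concat_seq (s_seq n) true g.

Definition inv_rel {X : Type} (A : X -> X -> Prop) : X -> X -> Prop :=
  fun x y => A y x.

(* The graph A of the f_n contains a triangle: near the diagonal there is x
   with edges x -> f_n x, x -> f_m x and f_n x -> f_m (f_n x) = f_m x for some
   m < n. Edges of G0 flip a single digit, so G0 has no triangle; this excludes
   the reductions of A and of its inverse to G0.

   The other four use the hypothesis in the form: for i > j, the f_j-edge out
   of f_i u lands at the same point as the f_j-edge out of u.
   - If h : 2^omega -> X is a Borel injective homomorphism from G0 (or from its
     inverse), Baire category yields j such that h x -> h (flip 0 x) is an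
     f_j-edge for comeager many x in a cylinder. For such a generic x,
     injectivity of h gives the edges h x -> h (flip n x), for j+2 suitable
     coordinates n, distinct indices, one of them i > j; hence
     h (flip 0 (flip n x)) = h (flip 0 x).
   - If h : X -> X is Borel, injective and reverses A, Baire category yields j
     such that the back edge h (f_b z) -> h z is an f_j-edge for comeager many
     z. A generic point x of the image receives edges y -> x from arbitrarily
     close generic points y; as h is continuous on a comeager set, the edge
     h x -> h y has an index i > j, so the back edges out of h y and h x land
     at the same point and y = x, although no f_c has a fixed point. *)

From Stdlib Require Import Reals Lra Lia Arith List Classical ClassicalEpsilon FunctionalExtensionality PropExtensionality.
From Stdlib Require Cantor.
Open Scope R_scope.

Lemma dependent_choice {A : Type} (Q : A -> Prop) (P : nat -> A -> A -> Prop) (a0 : A) :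
  Q a0 -> (forall k a, Q a -> exists a', Q a' /\ P k a a') ->
  exists s : nat -> A, s 0%nat = a0 /\ forall k, Q (s k) /\ P k (s k) (s (S k)).
Proof.
  intros H0 Hstep.
  set (next := fun k a => epsilon (inhabits a) (fun a' => Q a -> Q a' /\ P k a a')).
  assert (Hnext : forall k a, Q a -> Q (next k a) /\ P k a (next k a)).
  { intros k a Ha. apply (epsilon_spec (inhabits a) (fun a' => Q a -> Q a' /\ P k a a')); auto.
    destruct (Hstep k a Ha) as [a' Ha']. eauto. }
  set (s := fix s k := match k with 0%nat => a0 | S k => next k (s k) end).
  assert (HQ : forall k, Q (s k)) by (induction k; simpl; [|apply Hnext]; auto).
  exists s. split; auto. intros k. split; auto. apply Hnext; auto.
Qed.

(** * Baire category *)

Section Baire.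
Context {T : Type} (O : (T -> Prop) -> Prop).

Definition is_topology : Prop :=
  (forall U V, O U -> O V -> O (fun x => U x /\ V x)) /\
  (forall F : (T -> Prop) -> Prop, (forall U, F U -> O U) ->
      O (fun x => exists U, F U /\ U x)) /\
  O (fun _ => True).

Definition nowhere_dense (F : T -> Prop) : Prop :=
  forall U, O U -> (exists x, U x) ->
    exists V, O V /\ (exists x, V x) /\ (forall x, V x -> U x) /\
              (forall x, V x -> ~ F x).

Definition meager (M : T -> Prop) : Prop :=
  exists F : nat -> T -> Prop, (forall k, nowhere_dense (F k)) /\
    forall x, M x -> exists k, F k x.

Definition baire_property (S : T -> Prop) : Prop :=
  exists U, O U /\ meager (fun x => ~ (S x <-> U x)).

Definition baire_space : Prop :=
  forall M U, meager M -> O U -> (exists x, U x) -> exists x, U x /\ ~ M x.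

Lemma meager_sub M M' : meager M' -> (forall x, M x -> M' x) -> meager M.
Proof. intros (F & HF & Hc) Hs. exists F; split; auto. Qed.

Lemma meager_empty : meager (fun _ => False).
Proof.
  exists (fun _ _ => False). split; [|tauto].
  intros k U HU [x Hx]. exists U; repeat split; eauto.
Qed.

Lemma nowhere_dense_meager F : nowhere_dense F -> meager F.
Proof. intros H. exists (fun _ => F). split; auto. intros x Hx; exists 0%nat; auto. Qed.

Lemma meager_countable_union (M : nat -> T -> Prop) :
  (forall n, meager (M n)) -> meager (fun x => exists n, M n x).
Proof.
  intros H. destruct (choice _ H) as [Fs HFs].
  exists (fun k => let p := Cantor.of_nat k in Fs (fst p) (snd p)). split.
  - intros k. apply HFs.
  - intros x [n Hn]. destruct (proj2 (HFs n) x Hn) as [k Hk].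
    exists (Cantor.to_nat (n, k)). rewrite Cantor.cancel_of_to. exact Hk.
Qed.

Lemma meager_enumerated_union {I : Type} (e : nat -> I) (M : I -> T -> Prop) :
  (forall i, exists n, e n = i) ->
  (forall i, meager (M i)) -> meager (fun x => exists i, M i x).
Proof.
  intros Hs H. apply meager_sub with (fun x => exists n, M (e n) x).
  - apply meager_countable_union. intros; apply H.
  - intros x [i Hi]. destruct (Hs i) as [n <-]. eauto.
Qed.

Lemma meager_union2 M1 M2 : meager M1 -> meager M2 ->
  meager (fun x => M1 x \/ M2 x).
Proof.
  intros H1 H2.
  apply meager_sub with (fun x => exists n : nat, (if Nat.eqb n 0 then M1 else M2) x).
  - apply meager_countable_union. intros [|n]; simpl; auto.
  - intros x [Hx|Hx]; [exists 0%nat | exists 1%nat]; simpl; auto.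
Qed.

Section Topology.
Hypothesis HT : is_topology.

Lemma open_inter U V : O U -> O V -> O (fun x => U x /\ V x).
Proof. apply HT. Qed.

Lemma open_full : O (fun _ => True).
Proof. apply HT. Qed.

Lemma open_family_union (F : (T -> Prop) -> Prop) : (forall U, F U -> O U) ->
  O (fun x => exists U, F U /\ U x).
Proof. apply HT. Qed.

Lemma open_ext U V : O U -> (forall x, U x <-> V x) -> O V.
Proof.
  intros HU H.
  replace V with U; auto.
  apply functional_extensionality; intro x; apply propositional_extensionality; auto.
Qed.

Lemma open_empty : O (fun _ => False).
Proof.
  eapply open_ext. apply (open_family_union (fun _ => False)). tauto.
  intros x; split; [intros (U & [] & _)| tauto].
Qed.

Lemma open_const (P : Prop) : O (fun _ => P).
Proof.
  destruct (classic P) as [H|H].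
  - apply (open_ext _ _ open_full). tauto.
  - apply (open_ext _ _ open_empty). tauto.
Qed.

Lemma open_countable_union (F : nat -> T -> Prop) : (forall n, O (F n)) ->
  O (fun x => exists n, F n x).
Proof.
  intros H. eapply open_ext. apply (open_family_union (fun U => exists n, U = F n)).
  - intros U [n ->]; auto.
  - intros x; split.
    + intros (U & [n ->] & Hx); eauto.
    + intros [n Hn]; exists (F n); eauto.
Qed.

Definition exterior (F : T -> Prop) (x : T) : Prop :=
  exists V, (O V /\ forall y, V y -> ~ F y) /\ V x.

Lemma exterior_open F : O (exterior F).
Proof. apply open_family_union; tauto. Qed.

Lemma exterior_disjoint F x : exterior F x -> ~ F x.
Proof. intros (V & [_ HV] & Hx). auto. Qed.

Lemma exterior_dense F U : nowhere_dense F -> O U -> (exists x, U x) ->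
  exists x, U x /\ exterior F x.
Proof.
  intros HF HU Hne. destruct (HF U HU Hne) as (V & HV & [v Hv] & HVU & HVF).
  exists v. split; auto. exists V; auto.
Qed.

Lemma baire_property_open U : O U -> baire_property U.
Proof.
  intros HU. exists U; split; auto. apply meager_sub with (fun _ => False).
  apply meager_empty. intros x Hx; apply Hx; tauto.
Qed.

Lemma baire_property_compl S : baire_property S -> baire_property (fun x => ~ S x).
Proof.
  intros (U & HU & HM).
  set (V := exterior U).
  exists V; split; [apply exterior_open|].
  apply meager_sub with (fun x => ~ (S x <-> U x) \/ (~ U x /\ ~ V x)).
  - apply meager_union2; auto. apply nowhere_dense_meager.
    intros P HP [p Hp].
    destruct (classic (exists x, P x /\ U x)) as [[x [Hx1 Hx2]]|Hn].
    + exists (fun y => P y /\ U y); repeat split; eauto.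
      * apply open_inter; auto.
      * intros y [Hy _]. auto.
      * intros y [_ Hy] [Hu _]. auto.
    + exists P; repeat split; eauto.
      intros y Hy [_ HnV]. apply HnV. exists P; split; auto.
      split; auto. intros z Hz Hu. apply Hn; eauto.
  - intros x Hx.
    destruct (classic (U x)) as [Hu|Hu].
    + left. intros Hiff. apply Hx. split.
      * intros Hs; exfalso. destruct (classic (V x)) as [Hv|Hv].
        -- apply (exterior_disjoint U x Hv Hu).
        -- apply Hs. apply Hiff. auto.
      * intros Hv. exfalso; apply (exterior_disjoint U x Hv Hu).
    + destruct (classic (V x)) as [Hv|Hv].
      * left. intros Hiff. apply Hx. split; auto.
        intros _ Hs. apply Hu. apply Hiff; auto.
      * right; auto.
Qed.

Lemma baire_property_countable_union (S : nat -> T -> Prop) :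
  (forall n, baire_property (S n)) -> baire_property (fun x => exists n, S n x).
Proof.
  intros H. destruct (choice _ H) as [Us HUs].
  exists (fun x => exists n, Us n x). split.
  - apply open_countable_union. intros n. apply HUs.
  - apply meager_sub with (fun x => exists n, ~ (S n x <-> Us n x)).
    + apply meager_countable_union. intros n. apply HUs.
    + intros x Hx. apply NNPP. intros Hn. apply Hx.
      split; intros [n Hn']; exists n; apply NNPP; intros Hc'; apply Hn;
        exists n; intros Hi; apply Hc', Hi; auto.
Qed.

Lemma baire_property_ext S S' : baire_property S -> (forall x, S x <-> S' x) ->
  baire_property S'.
Proof.
  intros (U & HU & HM) H. exists U; split; auto.
  eapply meager_sub. apply HM. intros x Hx Hi. apply Hx. rewrite <- H. auto.
Qed.

Lemma Borel_baire_property S : Borel O S -> baire_property S.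
Proof.
  induction 1.
  - apply baire_property_open; auto.
  - apply baire_property_compl; auto.
  - apply baire_property_countable_union; auto.
  - eapply baire_property_ext; eauto.
Qed.

Lemma baire_cover (W0 : T -> Prop) (E : nat -> T -> Prop) :
  baire_space -> O W0 -> (exists x, W0 x) -> (forall n, baire_property (E n)) ->
  (forall x, W0 x -> exists n, E n x) ->
  exists n W, O W /\ (exists x, W x) /\ (forall x, W x -> W0 x) /\
    meager (fun x => W x /\ ~ E n x).
Proof.
  intros Hb HW0 Hne HE Hcov. destruct (choice _ HE) as [Us HUs].
  destruct (classic (exists n x, W0 x /\ Us n x)) as [[n [x [Hx1 Hx2]]]|Hn].
  - exists n, (fun x => Us n x /\ W0 x). repeat split.
    + apply open_inter; auto. apply HUs.
    + eauto.
    + tauto.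
    + eapply meager_sub. apply HUs.
      intros y [[Hy1 Hy2] Hy3] Hi. apply Hy3, Hi. auto.
  - exfalso.
    assert (HM : meager (fun x => exists n, ~ (E n x <-> Us n x))).
    { apply meager_countable_union. intros n. apply HUs. }
    destruct (Hb _ _ HM HW0 Hne) as [x [Hx Hnx]].
    apply Hnx. destruct (Hcov x Hx) as [n Hn'].
    exists n. intros Hi. apply Hn. exists n, x. split; auto. apply Hi; auto.
Qed.

Lemma Borel_inter A B : Borel O A -> Borel O B -> Borel O (fun x => A x /\ B x).
Proof.
  intros HA HB.
  apply Borel_ext with (fun x => ~ exists n : nat,
    (if Nat.eqb n 0 then fun y => ~ A y else fun y => ~ B y) x).
  - intros x; split.
    + intros H; split; apply NNPP; intros Hn; apply H; [exists 0%nat | exists 1%nat]; auto.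
    + intros [H1 H2] [[|n] Hn]; simpl in Hn; auto.
  - apply Borel_compl, Borel_union. intros [|n]; simpl; apply Borel_compl; auto.
Qed.

Lemma Borel_const (P : Prop) : Borel O (fun _ => P).
Proof. apply Borel_open, open_const. Qed.

End Topology.
End Baire.

Lemma continuous_Borel_map {T1 T2 : Type} (O1 : (T1 -> Prop) -> Prop)
  (O2 : (T2 -> Prop) -> Prop) (p : T1 -> T2) :
  (forall U, O2 U -> O1 (fun x => U (p x))) -> Borel_map O1 O2 p.
Proof.
  intros H B HB. induction HB.
  - apply Borel_open; auto.
  - apply Borel_compl; auto.
  - apply Borel_union; auto.
  - eapply Borel_ext; [|eauto]. intros x; apply H0.
Qed.

Lemma partial_preimage_Borel {T1 T2 : Type} (O1 : (T1 -> Prop) -> Prop)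
  (O2 : (T2 -> Prop) -> Prop) (HT1 : is_topology O1) (D : T1 -> Prop) (g : T1 -> T2) :
  O1 D -> (forall V, O2 V -> O1 (fun x => D x /\ V (g x))) ->
  forall B, Borel O2 B -> Borel O1 (fun x => D x /\ B (g x)).
Proof.
  intros HD Hc B HB. induction HB.
  - apply Borel_open; auto.
  - apply Borel_ext with (fun x => D x /\ ~ (D x /\ U (g x))).
    + intros x; tauto.
    + apply Borel_inter; auto. apply Borel_open; auto. apply Borel_compl; auto.
  - apply Borel_ext with (fun x => exists n, D x /\ F n (g x)).
    + intros x; split; [intros [n [H1 H2]]; eauto | intros [H1 [n H2]]; eauto].
    + apply Borel_union; auto.
  - eapply Borel_ext; [|eauto]. intros x; simpl. rewrite H. tauto.
Qed.

Lemma exists_inv_succ_lt eps : 0 < eps -> exists N : nat, / (INR N + 1) < eps.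
Proof.
  intros H. destruct (archimed_cor1 eps H) as [N [HN HN0]].
  exists N. apply Rle_lt_trans with (/ INR N); auto.
  apply Rinv_le_contravar. apply lt_0_INR; lia. lra.
Qed.

Lemma inv_succ_pos (N : nat) : 0 < / (INR N + 1).
Proof. apply Rinv_0_lt_compat. pose proof (pos_INR N). lra. Qed.


Lemma finite_positive_lower_bound (P : nat -> Prop) (r : nat -> R) :
  (forall i, P i -> 0 < r i) ->
  forall j, exists rho, 0 < rho /\ forall i, (i <= j)%nat -> P i -> rho <= r i.
Proof.
  intros Hr. induction j as [|j [rho [Hrho H]]].
  - destruct (classic (P 0%nat)) as [H0|H0].
    + exists (r 0%nat). split; auto. intros i Hi Pi. replace i with 0%nat by lia. lra.
    + exists 1. split; [lra|]. intros i Hi Pi. replace i with 0%nat in Pi by lia. contradiction.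
  - destruct (classic (P (S j))) as [H0|H0].
    + exists (Rmin rho (r (S j))). split; [apply Rmin_pos; auto|].
      intros i Hi Pi. destruct (Nat.eq_dec i (S j)) as [->|Hne]; [apply Rmin_r|].
      eapply Rle_trans; [apply Rmin_l|apply H; auto; lia].
    + exists rho. split; auto. intros i Hi Pi. destruct (Nat.eq_dec i (S j)) as [->|Hne].
      * contradiction.
      * apply H; auto. lia.
Qed.

(** * The Cantor space *)

Definition cylinder (p : cantor) (L : nat) (y : cantor) : Prop :=
  forall i, (i < L)%nat -> y i = p i.

Lemma cantor_topology : is_topology cantor_open.
Proof.
  split; [|split].
  - intros U V HU HV x [Hu Hv]. destruct (HU x Hu) as [N1 H1]. destruct (HV x Hv) as [N2 H2].
    exists (max N1 N2). intros y Hy. split; [apply H1|apply H2]; intros i Hi; apply Hy; lia.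
  - intros F HF x [U [HFU HU]]. destruct (HF U HFU x HU) as [N H]. exists N.
    intros y Hy. exists U; auto.
  - intros x _. exists 0%nat. auto.
Qed.

Lemma cylinder_open p L : cantor_open (cylinder p L).
Proof. intros x Hx. exists L. intros y Hy i Hi. rewrite Hy; auto. Qed.

Lemma cantor_baire : baire_space cantor_open.
Proof.
  intros M U [F [HF HM]] HU [x0 Hx0].
  destruct (HU x0 Hx0) as [L0 HL0].
  set (P := fun (k : nat) (pl pl' : cantor * nat) =>
     (S k <= snd pl')%nat /\ forall y, cylinder (fst pl') (snd pl') y ->
       cylinder (fst pl) (snd pl) y /\ ~ F k y).
  destruct (dependent_choice (fun _ => True) P (x0, L0)) as (ps & Hps0 & Hps); auto.
  { intros k [p L] _. simpl.
    destruct (HF k (cylinder p L) (cylinder_open p L)) as (V & HV & [v Hv] & HVs & HVF).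
    { exists p. intros i Hi; auto. }
    destruct (HV v Hv) as [Nv HNv].
    exists (v, max (max Nv L) (S k)). split; auto. unfold P; simpl. split. lia.
    intros y Hy. assert (Vy : V y) by (apply HNv; intros i Hi; apply Hy; lia).
    split; [intros i Hi; rewrite Hy by lia; apply (HVs v Hv); auto | apply HVF; auto]. }
  assert (Hnest : forall k m y, (k <= m)%nat -> cylinder (fst (ps m)) (snd (ps m)) y ->
                    cylinder (fst (ps k)) (snd (ps k)) y).
  { intros k m y Hkm. induction Hkm; auto. intros Hy. apply IHHkm, (Hps m); auto. }
  (* the limit point takes its i-th digit from stage i+1, whose cylinder has length > i *)
  set (x := fun i => fst (ps (S i)) i).
  assert (Hx : forall k, cylinder (fst (ps k)) (snd (ps k)) x).
  { intros k i Hi. unfold x.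
    destruct (le_lt_dec k (S i)) as [Hk|Hk].
    - apply (Hnest k (S i)); auto. intros i' _; auto.
    - symmetry. destruct (Hps i) as [_ [Hl _]].
      apply (Hnest (S i) k); [lia| |lia]. intros i' _; auto. }
  exists x. split.
  - apply HL0. pose proof (Hx 0%nat) as H0. rewrite Hps0 in H0. exact H0.
  - intros HMx. destruct (HM x HMx) as [k Hk]. destruct (Hps k) as [_ [_ H]].
    apply (H x (Hx (S k))); auto.
Qed.

Definition flip (n : nat) (x : cantor) : cantor :=
  fun i => if Nat.eqb i n then negb (x i) else x i.

Lemma flip_involutive n x : flip n (flip n x) = x.
Proof.
  apply functional_extensionality. intros i. unfold flip.
  destruct (Nat.eqb i n); auto. apply Bool.negb_involutive.
Qed.

Lemma flip_inj n x y : flip n x = flip n y -> x = y.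
Proof. intros H. rewrite <- (flip_involutive n x), H. apply flip_involutive. Qed.

Lemma flip_index_inj a c x : flip a x = flip c x -> a = c.
Proof.
  intros H. destruct (Nat.eq_dec a c) as [|Hne]; auto.
  apply (f_equal (fun z => z a)) in H. unfold flip in H.
  rewrite Nat.eqb_refl in H. destruct (Nat.eqb_spec a c); [contradiction|].
  destruct (x a); discriminate.
Qed.

Lemma flip_neq n x : flip n x <> x.
Proof.
  intros H. apply (f_equal (fun z => z n)) in H. unfold flip in H.
  rewrite Nat.eqb_refl in H. destruct (x n); discriminate.
Qed.

Lemma flip_continuous n U : cantor_open U -> cantor_open (fun x => U (flip n x)).
Proof.
  intros HU x Hx. destruct (HU _ Hx) as [N HN]. exists (max N (S n)).
  intros y Hy. apply HN. intros i Hi. unfold flip.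
  destruct (Nat.eqb i n); rewrite Hy; auto; lia.
Qed.

Lemma flip_Borel n : Borel_map cantor_open cantor_open (flip n).
Proof. apply continuous_Borel_map, flip_continuous. Qed.

Lemma flip_nowhere_dense n F : nowhere_dense cantor_open F ->
  nowhere_dense cantor_open (fun x => F (flip n x)).
Proof.
  intros HF U HU [u Hu].
  destruct (HF (fun x => U (flip n x)) (flip_continuous n U HU))
    as (V & HV & [v Hv] & HVs & HVF).
  { exists (flip n u). rewrite flip_involutive. auto. }
  exists (fun x => V (flip n x)). repeat split.
  - apply flip_continuous; auto.
  - exists (flip n v). rewrite flip_involutive; auto.
  - intros x Hx. rewrite <- (flip_involutive n x). apply HVs; auto.
  - intros x Hx. apply HVF; auto.
Qed.

Lemma flip_meager n M : meager cantor_open M -> meager cantor_open (fun x => M (flip n x)).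
Proof.
  intros [F [HF HM]]. exists (fun k x => F k (flip n x)). split.
  - intros k; apply flip_nowhere_dense; auto.
  - intros x Hx. apply HM; auto.
Qed.

Definition has_prefix (l : list bool) (x : cantor) : Prop :=
  forall i, (i < length l)%nat -> x i = nth i l false.

Lemma has_prefix_open l : cantor_open (has_prefix l).
Proof. intros x Hx. exists (length l). intros y Hy i Hi. rewrite Hy; auto. Qed.

Lemma has_prefix_app l w x : has_prefix (l ++ w) x -> has_prefix l x.
Proof.
  intros H i Hi. rewrite H. rewrite app_nth1; auto. rewrite length_app. lia.
Qed.

Lemma has_prefix_nonempty l : exists x, has_prefix l x.
Proof. exists (fun i => nth i l false). intros i Hi; auto. Qed.

Lemma nth_map_seq {A : Type} (F : nat -> A) k i a : (i < k)%nat ->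
  nth i (map F (seq 0 k)) a = F i.
Proof.
  intros H. rewrite (nth_indep _ a (F 0%nat)) by (rewrite length_map, length_seq; auto).
  rewrite map_nth, seq_nth; auto.
Qed.

Lemma has_prefix_cylinder (p : cantor) L x :
  has_prefix (map p (seq 0 L)) x -> cylinder p L x.
Proof.
  intros H i Hi. rewrite H by (rewrite length_map, length_seq; auto). apply nth_map_seq; auto.
Qed.

Lemma extend_through_levels (t : nat -> list bool) (b : bool)
  (Htl : forall n, length (t n) = n) (Htd : forall u, exists n w, t n = u ++ w) :
  forall K v, exists v' lv, (exists w, v' = v ++ w) /\ length lv = K /\ NoDup lv /\
    (forall n, In n lv -> (length v <= n)%nat /\ exists w, v' = t n ++ b :: w).
Proof.
  induction K as [|K IH]; intros v.
  - exists v, nil. split; [exists nil; rewrite app_nil_r; auto|].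
    split; [auto|split; [constructor|intros n []]].
  - destruct (Htd v) as [n [w0 Hn]].
    destruct (IH (t n ++ b :: nil)) as (v' & lv & [w Hw] & Hl & Hnd & Hlv).
    assert (Hvn : (length v <= n)%nat) by (rewrite <- (Htl n), Hn, length_app; lia).
    exists v', (n :: lv). split; [|split; [|split]].
    + exists (w0 ++ b :: w). rewrite Hw, Hn, <- !app_assoc. auto.
    + simpl; auto.
    + constructor; auto. intros Hin. destruct (Hlv n Hin) as [Hle _].
      rewrite length_app, Htl in Hle. simpl in Hle. lia.
    + intros m [<-|Hin].
      * split; auto. exists w. rewrite Hw, <- app_assoc. auto.
      * destruct (Hlv m Hin) as [Hle Hm]. split; auto.
        rewrite length_app, Htl in Hle. simpl in Hle. lia.
Qed.

Lemma pigeonhole_large_value (I : nat -> nat) (lv : list nat) j : NoDup lv ->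
  (forall a c, In a lv -> In c lv -> I a = I c -> a = c) -> (S j < length lv)%nat ->
  exists n, In n lv /\ (j < I n)%nat.
Proof.
  intros Hnd Hinj Hlen. apply NNPP. intros Hn.
  assert (Hnd2 : NoDup (map I lv)) by (apply NoDup_map_NoDup_ForallPairs; auto).
  assert (Hincl : incl (map I lv) (seq 0 (S j))).
  { intros i Hi. apply in_map_iff in Hi. destruct Hi as [n [<- Hin]].
    apply in_seq. split; [lia|]. destruct (le_lt_dec (I n) j); [lia|].
    exfalso; apply Hn; eauto. }
  pose proof (NoDup_incl_length Hnd2 Hincl). rewrite length_map, length_seq in H. lia.
Qed.

(** * Polish spaces *)

Section Metric.
Context {X : Type} (O : (X -> Prop) -> Prop) (d : X -> X -> R)
  (d_nonneg : forall x y, 0 <= d x y)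
  (d_zero : forall x y, d x y = 0 <-> x = y)
  (d_sym : forall x y, d x y = d y x)
  (d_tri : forall x y z, d x z <= d x y + d y z)
  (d_open : forall U : X -> Prop,
        O U <-> (forall x, U x -> exists eps, 0 < eps /\
                   forall y, d x y < eps -> U y))
  (d_complete : forall s : nat -> X,
        (forall eps, 0 < eps -> exists N, forall m n,
            (N <= m)%nat -> (N <= n)%nat -> d (s m) (s n) < eps) ->
        exists l, forall eps, 0 < eps -> exists N, forall n,
            (N <= n)%nat -> d (s n) l < eps)
  (Dn : nat -> X) (d_dense : forall x eps, 0 < eps -> exists n, d x (Dn n) < eps).

Lemma dist_refl x : d x x = 0.
Proof. apply d_zero; auto. Qed.

Lemma dist_pos x y : x <> y -> 0 < d x y.
Proof.
  intros Hxy. destruct (d_nonneg x y) as [H|H]; auto.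
  exfalso. apply Hxy, d_zero. auto.
Qed.

Lemma metric_topology : is_topology O.
Proof.
  split; [|split].
  - intros U V HU HV. apply (proj2 (d_open _)). intros x [Hu Hv].
    destruct (proj1 (d_open U) HU x Hu) as [e1 [He1 H1]].
    destruct (proj1 (d_open V) HV x Hv) as [e2 [He2 H2]].
    exists (Rmin e1 e2). split. apply Rmin_pos; auto.
    intros y Hy. split; [apply H1|apply H2]; eapply Rlt_le_trans; eauto;
      [apply Rmin_l|apply Rmin_r].
  - intros F HF. apply (proj2 (d_open _)). intros x [U [HFU HU]].
    destruct (proj1 (d_open U) (HF U HFU) x HU) as [e [He H]].
    exists e; split; auto. intros y Hy. exists U; auto.
  - apply (proj2 (d_open _)). intros x _. exists 1; split; auto; lra.
Qed.

Lemma ball_open c r : O (fun y => d c y < r).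
Proof.
  apply (proj2 (d_open _)). intros x Hx. exists (r - d c x). split. lra.
  intros y Hy. pose proof (d_tri c x y). lra.
Qed.

Lemma open_has_ball U x : O U -> U x ->
  exists eps, 0 < eps /\ forall y, d x y < eps -> U y.
Proof. intros HU Hx. apply (proj1 (d_open U)); auto. Qed.

Lemma nested_balls_limit (c : nat -> X) (r : nat -> R) (s : nat -> X) :
  (forall k, r k <= / (INR k + 1)) ->
  (forall k m, (S k <= m)%nat -> d (c k) (s m) < r k) ->
  exists l, (forall k, d (c k) l < 2 * r k) /\
    forall eps, 0 < eps -> exists N, forall n, (N <= n)%nat -> d (s n) l < eps.
Proof.
  intros Hr Hin.
  destruct (d_complete s) as [l Hl].
  { intros eps Heps. destruct (exists_inv_succ_lt (eps / 2)) as [N HN]. lra.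
    exists (S N). intros m n Hm Hn.
    pose proof (Hin N m Hm). pose proof (Hin N n Hn). pose proof (Hr N).
    pose proof (d_tri (s m) (c N) (s n)). rewrite (d_sym (s m) (c N)) in *. lra. }
  exists l. split; auto.
  intros k. assert (Hk : 0 < r k).
  { pose proof (Hin k (S k) (le_n _)). pose proof (d_nonneg (c k) (s (S k))). lra. }
  destruct (Hl (r k) Hk) as [N HN].
  pose proof (HN (max N (S k)) (Nat.le_max_l _ _)).
  pose proof (Hin k (max N (S k)) (Nat.le_max_r _ _)).
  pose proof (d_tri (c k) (s (max N (S k))) l). lra.
Qed.

Lemma metric_baire : baire_space O.
Proof.
  intros M U [F [HF HM]] HU [x0 Hx0].
  destruct (open_has_ball U x0 HU Hx0) as [e0 [He0 H0]].
  set (P := fun (k : nat) (cr cr' : X * R) =>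
              snd cr' <= / (INR k + 1) /\
              forall y, d (fst cr') y < 2 * snd cr' -> d (fst cr) y < snd cr /\ ~ F k y).
  destruct (dependent_choice (fun cr => 0 < snd cr) P (x0, e0 / 2)) as (cs & Hcs0 & Hcs).
  { simpl; lra. }
  { intros k [c r] Hr. simpl in Hr.
    destruct (HF k (fun y => d c y < r) (ball_open c r)) as (V & HV & [v Hv] & HVs & HVF).
    { exists c. rewrite dist_refl. auto. }
    destruct (open_has_ball V v HV Hv) as [e [He Hb]].
    pose proof (inv_succ_pos k).
    pose proof (Rmin_l (e / 2) (/ (INR k + 1))). pose proof (Rmin_r (e / 2) (/ (INR k + 1))).
    exists (v, Rmin (e / 2) (/ (INR k + 1))). unfold P; simpl.
    split; [apply Rmin_pos; lra|split; auto].
    intros y Hy. split; [apply HVs, Hb|apply HVF, Hb]; lra. }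
  assert (Hnest : forall k m y, (k <= m)%nat -> d (fst (cs m)) y < snd (cs m) ->
                    d (fst (cs k)) y < snd (cs k)).
  { intros k m y Hkm. induction Hkm; auto. intros Hy. apply IHHkm.
    destruct (Hcs m) as [_ [_ Hb]]. pose proof (proj1 (Hcs (S m))). apply Hb. lra. }
  destruct (nested_balls_limit (fun k => fst (cs (S k))) (fun k => snd (cs (S k)))
              (fun m => fst (cs m))) as (l & Hl & _).
  { intros k. apply Hcs. }
  { intros k m Hkm. apply Hnest with m; auto. rewrite dist_refl. apply Hcs. }
  exists l. split.
  - apply H0. destruct (Hcs 0%nat) as [_ [_ Hb]].
    destruct (Hb l (Hl 0%nat)) as [Hd _]. rewrite Hcs0 in Hd. simpl in Hd. lra.
  - intros HMl. destruct (HM l HMl) as [k Hk].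
    destruct (Hcs k) as [_ [_ Hb]]. destruct (Hb l (Hl k)) as [_ Hn]. auto.
Qed.

Definition center (q : nat) : X := Dn (fst (Cantor.of_nat q)).
Definition radius (q : nat) : R := / (INR (snd (Cantor.of_nat q)) + 1).
Definition basic (q : nat) (y : X) : Prop := d (center q) y < radius q.

Lemma basic_open q : O (basic q).
Proof. apply ball_open. Qed.

Lemma basic_diameter q x y : basic q x -> basic q y -> d x y < 2 * radius q.
Proof.
  unfold basic. intros Hx Hy. pose proof (d_tri x (center q) y).
  rewrite (d_sym x (center q)) in *. lra.
Qed.

Lemma basic_around x eps : 0 < eps -> exists q, basic q x /\ radius q < eps.
Proof.
  intros He. destruct (exists_inv_succ_lt eps He) as [m Hm].
  destruct (d_dense x (/ (INR m + 1))) as [i Hi]; [apply inv_succ_pos|].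
  exists (Cantor.to_nat (i, m)). unfold basic, center, radius.
  rewrite Cantor.cancel_of_to. simpl. rewrite d_sym. auto.
Qed.

Lemma basic_separate x y : x <> y ->
  exists q1 q2, (forall u, basic q1 u -> ~ basic q2 u) /\ basic q1 x /\ basic q2 y.
Proof.
  intros Hxy. pose proof (dist_pos x y Hxy) as Hd.
  destruct (basic_around x (d x y / 4)) as (q1 & Hx & Hr1); [lra|].
  destruct (basic_around y (d x y / 4)) as (q2 & Hy & Hr2); [lra|].
  exists q1, q2. repeat split; auto. intros u Hu1 Hu2.
  pose proof (basic_diameter q1 x u Hx Hu1). pose proof (basic_diameter q2 y u Hy Hu2).
  pose proof (d_tri x u y). rewrite (d_sym u y) in *. lra.
Qed.

Lemma Borel_equalizer {Y : Type} (OY : (Y -> Prop) -> Prop) (HY : is_topology OY)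
  (Dom : Y -> Prop) (p q : Y -> X) :
  Borel OY Dom ->
  (forall V, O V -> Borel OY (fun y => Dom y /\ V (p y))) ->
  (forall V, O V -> Borel OY (fun y => V (q y))) ->
  Borel OY (fun y => Dom y /\ p y = q y).
Proof.
  intros HD Hp Hq.
  set (Sep := fun k y => let pr := Cantor.of_nat k in
        (forall u, basic (fst pr) u -> ~ basic (snd pr) u) /\
        (Dom y /\ basic (fst pr) (p y)) /\ basic (snd pr) (q y)).
  apply Borel_ext with (fun y => Dom y /\ ~ exists k, Sep k y).
  - intros y; split.
    + intros [H1 H2]; split; auto. apply NNPP; intros Hne.
      destruct (basic_separate _ _ Hne) as (q1 & q2 & Hs & H3 & H4). apply H2.
      exists (Cantor.to_nat (q1, q2)). unfold Sep. rewrite Cantor.cancel_of_to; simpl. auto.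
    + intros [H1 H2]; split; auto. intros (k & Hs & [_ H3] & H4). apply (Hs _ H3). congruence.
  - apply Borel_inter; auto. apply Borel_compl, Borel_union. intros k. unfold Sep.
    apply Borel_inter; auto. apply Borel_const; auto. apply Borel_inter; auto.
    apply Hp, basic_open. apply Hq, basic_open.
Qed.

Lemma Borel_map_continuous_on_comeager {Y : Type} (OY : (Y -> Prop) -> Prop)
  (HY : is_topology OY) (h : Y -> X) : Borel_map OY O h ->
  exists C, meager OY (fun y => ~ C y) /\
    forall y eps, C y -> 0 < eps -> exists U, OY U /\ U y /\
       forall z, C z -> U z -> d (h y) (h z) < eps.
Proof.
  intros Hh.
  destruct (choice _ (fun q => Borel_baire_property OY HY (fun y => basic q (h y))
                               (Hh _ (Borel_open O _ (basic_open q))))) as [Us HUs].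
  set (C := fun y => forall q, basic q (h y) <-> Us q y).
  exists C. split.
  - eapply meager_sub. apply meager_countable_union. intros q. apply HUs.
    intros y Hy. apply NNPP. intros Hn. apply Hy. intros q. apply NNPP. eauto.
  - intros y eps Hy He.
    destruct (basic_around (h y) (eps / 2)) as (q & Hq & Hr); [lra|].
    exists (Us q). split; [apply HUs|].
    split; [apply Hy; auto|].
    intros z Hz HU. apply (Hz q) in HU. pose proof (basic_diameter q _ _ Hq HU). lra.
Qed.

Definition partial_open_map (D : X -> Prop) (g : X -> X) : Prop :=
  O D /\ (forall V, O V -> O (fun x => D x /\ V (g x))) /\
  (forall U, O U -> O (fun y => exists x, D x /\ U x /\ g x = y)).

Lemma nowhere_dense_preimage D g F : partial_open_map D g -> nowhere_dense O F ->
  nowhere_dense O (fun x => D x /\ F (g x)).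
Proof.
  intros (HD & Hc & Ho) HF U HU [u Hu].
  pose proof metric_topology as HT.
  destruct (classic (exists x, U x /\ D x)) as [[x [Hx1 Hx2]]|Hn].
  - set (W := fun x => U x /\ D x).
    assert (HW : O W) by (apply open_inter; auto).
    destruct (HF (fun y => exists x, D x /\ W x /\ g x = y) (Ho W HW))
      as (V & HV & [v Hv] & HVs & HVF).
    { exists (g x). exists x. repeat split; auto. }
    exists (fun x => W x /\ (D x /\ V (g x))). repeat split.
    + apply open_inter; auto.
    + destruct (HVs v Hv) as (x' & H1 & H2 & H3). exists x'. subst. repeat split; auto; apply H2.
    + intros y [[Hy _] _]; auto.
    + intros y [_ [_ Hy]] [_ Hf]. apply (HVF _ Hy Hf).
  - exists U. repeat split; eauto. intros y Hy [HDy _]. apply Hn; eauto.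
Qed.

Lemma meager_preimage D g M : partial_open_map D g -> meager O M ->
  meager O (fun x => D x /\ M (g x)).
Proof.
  intros Hp [F [HF HM]]. exists (fun k x => D x /\ F k (g x)). split.
  - intros k. apply nowhere_dense_preimage; auto.
  - intros x [Hx1 Hx2]. destruct (HM _ Hx2) as [k Hk]. eauto.
Qed.

Fixpoint list_code (l : list nat) : nat :=
  match l with nil => 0%nat | a :: l' => S (Cantor.to_nat (a, list_code l')) end.

Lemma list_nat_enumerable : exists e : nat -> list nat, forall l, exists n, e n = l.
Proof.
  assert (Hinj : forall l l', list_code l = list_code l' -> l = l').
  { induction l as [|a l IH]; intros [|a' l'] H; cbn [list_code] in H; try discriminate; auto.
    apply Nat.succ_inj, Cantor.to_nat_inj in H. injection H as -> H. f_equal. auto. }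
  exists (fun n => epsilon (inhabits nil) (fun l => list_code l = n)).
  intros l. exists (list_code l). apply Hinj.
  apply (epsilon_spec (inhabits nil) (fun l' => list_code l' = list_code l)). eauto.
Qed.

(** Open continuous maps send relatively comeager sets to relatively comeager
   sets: a point of [g(W)] outside the meager union of the "dead ends" of a
   Cantor scheme of basic balls in [W] is the image of a branch limit. *)
Section ImageOfComeager.
Variables (D : X -> Prop) (g : X -> X) (W G : X -> Prop) (F : nat -> X -> Prop).
Hypotheses (Hg : partial_open_map D g) (HW : O W) (HWD : forall x, W x -> D x)
  (HF : forall k, nowhere_dense O (F k)) (HFG : forall x, W x -> ~ G x -> exists k, F k x).

Definition child (P : X -> Prop) (k q : nat) (y : X) : Prop :=
  radius q <= / (INR k + 1) /\
  (forall z, d (center q) z < 2 * radius q -> P z /\ exterior O (F k) z) /\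
  basic q y.

Lemma child_open P k q : O (child P k q).
Proof.
  pose proof metric_topology as HT. unfold child.
  destruct (classic (radius q <= / (INR k + 1) /\
     (forall z, d (center q) z < 2 * radius q -> P z /\ exterior O (F k) z))) as [Hy|Hn].
  - apply (open_ext O _ _ (basic_open q)). intros y; tauto.
  - apply (open_ext O _ _ (open_empty O HT)). intros y; tauto.
Qed.

Lemma child_sub P k q y : child P k q y -> P y.
Proof.
  intros (_ & H1 & H2). apply H1. unfold basic in H2.
  pose proof (d_nonneg (center q) y). lra.
Qed.

Lemma child_dense P k U : O P -> O U -> (exists x, U x /\ P x) ->
  exists q y, U y /\ child P k q y.
Proof.
  intros HP HU Hne. pose proof metric_topology as HT.
  destruct (exterior_dense O (F k) (fun x => U x /\ P x) (HF k))
    as [x [[Hx1 Hx2] Hx3]]; [apply open_inter; auto|auto|].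
  assert (HO : O (fun z => (U z /\ P z) /\ exterior O (F k) z)).
  { repeat apply open_inter; auto. apply exterior_open; auto. }
  destruct (open_has_ball _ x HO) as [rho [Hrho Hb]]; auto.
  pose proof (inv_succ_pos k).
  destruct (basic_around x (Rmin (rho / 3) (/ (INR k + 1)))) as (q & Hq & Hr).
  { apply Rmin_pos; lra. }
  pose proof (Rmin_l (rho / 3) (/ (INR k + 1))). pose proof (Rmin_r (rho / 3) (/ (INR k + 1))).
  exists q, x. split; auto. split; [lra|split; auto].
  intros z Hz. destruct (Hb z) as [[_ HPz] Hz']; auto.
  unfold basic in Hq. pose proof (d_tri x (center q) z). rewrite (d_sym x (center q)) in *. lra.
Qed.

Fixpoint cell (P : X -> Prop) (k : nat) (s : list nat) : X -> Prop :=
  match s with nil => P | q :: s' => cell (child P k q) (S k) s' end.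

Lemma cell_snoc s P k q :
  cell P k (s ++ q :: nil) = child (cell P k s) (k + length s) q.
Proof.
  revert P k. induction s as [|b s IH]; intros P k; simpl. f_equal; lia.
  rewrite IH. f_equal. lia.
Qed.

Lemma cell_open s P k : O P -> O (cell P k s).
Proof.
  revert P k. induction s as [|b s IH]; intros P k HP; simpl; auto. apply IH, child_open.
Qed.

Lemma cell_sub s P k y : cell P k s y -> P y.
Proof.
  revert P k. induction s as [|b s IH]; intros P k Hy; simpl in Hy; auto.
  apply (child_sub P k b), (IH _ _ Hy).
Qed.

Definition image (A : X -> Prop) (y : X) : Prop := exists x, A x /\ g x = y.

Definition dead_end (s : list nat) (y : X) : Prop :=
  image (cell W 0 s) y /\ ~ exists q, image (cell W 0 (s ++ q :: nil)) y.

Lemma dead_end_nowhere_dense s : nowhere_dense O (dead_end s).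
Proof.
  destruct Hg as (HD & Hc & Ho). pose proof metric_topology as HT.
  assert (HCo : O (cell W 0 s)) by (apply cell_open; auto).
  intros U HU [u Hu].
  destruct (classic (exists y0, U y0 /\ image (cell W 0 s) y0))
    as [[y0 [Hy0 [x0 [Hx0 Hgx0]]]]|Hn].
  - destruct (child_dense (cell W 0 s) (length s) (fun x => D x /\ U (g x)))
      as (q & x' & [HDx' HUx'] & Hx'); auto.
    { exists x0. split; auto. split; [apply HWD, (cell_sub s W 0), Hx0|subst; auto]. }
    rewrite <- (cell_snoc s W 0) in Hx'.
    exists (fun y => U y /\ image (cell W 0 (s ++ q :: nil)) y). repeat split.
    + apply open_inter; auto.
      apply (open_ext O _ _ (Ho _ (cell_open (s ++ q :: nil) W 0 HW))).
      intros y; split.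
      * intros (x & _ & H1 & H2). exists x; auto.
      * intros (x & H1 & H2). exists x. repeat split; auto. apply HWD, (cell_sub (s ++ q :: nil) W 0), H1.
    + exists (g x'). split; auto. exists x'; auto.
    + intros y [Hy _]; auto.
    + intros y [_ Hy] [_ Hn]. apply Hn; eauto.
  - exists U. repeat split; eauto. intros y Hy [Hy' _]. apply Hn; eauto.
Qed.

Lemma image_of_branch y : image W y -> (forall s, ~ dead_end s y) ->
  exists l, W l /\ G l /\ g l = y.
Proof.
  intros Hy0 Hnd.
  destruct (dependent_choice (fun s => image (cell W 0 s) y)
              (fun _ s s' => exists q, s' = s ++ q :: nil) nil)
    as (ss & Hss0 & Hss); auto.
  { intros k s Hs. apply NNPP. intros Hn. apply (Hnd s). split; auto.
    intros [q Hq]. apply Hn. eauto. }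
  destruct (choice (fun k q => ss (S k) = ss k ++ q :: nil)) as [qs Hqs].
  { intros k. apply Hss. }
  destruct (choice (fun k x => cell W 0 (ss k) x /\ g x = y)) as [xs Hxs].
  { intros k. apply Hss. }
  assert (Hlen : forall k, length (ss k) = k).
  { induction k; [rewrite Hss0; auto|]. rewrite Hqs, length_app, IHk. simpl. lia. }
  assert (Hstep : forall k, cell W 0 (ss (S k)) = child (cell W 0 (ss k)) k (qs k)).
  { intros k. rewrite Hqs, cell_snoc, Hlen. auto. }
  assert (Hnest : forall k m z, (k <= m)%nat -> cell W 0 (ss m) z -> cell W 0 (ss k) z).
  { intros k m z Hkm. induction Hkm; auto. intros Hz. apply IHHkm.
    rewrite Hstep in Hz. apply child_sub in Hz. auto. }
  assert (Hchild : forall k, child (cell W 0 (ss k)) k (qs k) (xs (S k))).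
  { intros k. rewrite <- Hstep. apply Hxs. }
  destruct (nested_balls_limit (fun k => center (qs k)) (fun k => radius (qs k)) xs)
    as (l & Hl & Hconv).
  { intros k. apply (Hchild k). }
  { intros k m Hkm. assert (Hm := proj1 (Hxs m)).
    apply (Hnest (S k)) in Hm; auto. rewrite Hstep in Hm. apply Hm. }
  assert (HlC : forall k, cell W 0 (ss k) l /\ exterior O (F k) l).
  { intros k. destruct (Hchild k) as (_ & H & _). apply H, Hl. }
  assert (HWl : W l) by (apply (cell_sub (ss 0%nat) W 0), (HlC 0%nat)).
  exists l. split; [|split]; auto.
  - apply NNPP. intros HnG. destruct (HFG l HWl HnG) as [k Hk].
    apply (exterior_disjoint O (F k) l); auto. apply HlC.
  - apply NNPP. intros Hne. pose proof (dist_pos _ _ Hne) as Hd.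
    destruct Hg as (_ & Hc & _).
    destruct (open_has_ball _ l (Hc _ (ball_open (g l) (d (g l) y)))) as [e [He Hb]].
    { split; [apply HWD, HWl|rewrite dist_refl; auto]. }
    destruct (Hconv e He) as [N HN]. destruct (Hb (xs N)) as [_ Hlt].
    { rewrite d_sym; apply HN; auto. }
    rewrite (proj2 (Hxs N)) in Hlt. lra.
Qed.

Lemma image_of_comeager_cover :
  meager O (fun y => image W y /\ ~ image (fun x => W x /\ G x) y).
Proof.
  destruct list_nat_enumerable as [e He].
  eapply meager_sub.
  - apply (meager_enumerated_union O e dead_end He). intros s.
    apply nowhere_dense_meager, dead_end_nowhere_dense.
  - intros y [Hy Hno]. apply NNPP. intros Hnp.
    destruct (image_of_branch y) as (l & HWl & HGl & Hgl); auto.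
    + intros s Hs. apply Hnp. eauto.
    + apply Hno. exists l. auto.
Qed.

End ImageOfComeager.

Lemma image_of_comeager D g W G : partial_open_map D g -> O W -> (forall x, W x -> D x) ->
  meager O (fun x => W x /\ ~ G x) ->
  meager O (fun y => (exists x, W x /\ g x = y) /\ ~ exists x, (W x /\ G x) /\ g x = y).
Proof.
  intros Hg HW HWD [F [HF HFG]].
  apply (image_of_comeager_cover D g W G F); auto.
Qed.

Section PartialMaps.
Variables (Df : nat -> X -> Prop) (f : nat -> X -> X).
Hypotheses (HDf : forall n, O (Df n))
  (Hfc : forall n V, O V -> O (fun x => Df n x /\ V (f n x)))
  (Hfo : forall n U, O U -> O (fun y => exists x, Df n x /\ U x /\ f n x = y))
  (Hfix : forall n x, Df n x -> f n x <> x)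
  (Hclos : forall x, closure2 O (graph_union Df f) x x)
  (Hhyp : forall m n x, (m < n)%nat -> Df n x -> Df m (f n x) -> Df m x ->
     f m (f n x) = f m x).

Lemma open_off_graph m K : (exists x, Df m x) ->
  exists U, O U /\ (exists x, U x) /\ (forall x, U x -> Df m x) /\
    forall k x, (k < K)%nat -> U x -> Df k x -> ~ U (f k x).
Proof.
  intros Hm. pose proof metric_topology as HT.
  induction K as [|K (U & HU & [u Hu] & HUm & HUk)].
  - exists (Df m). repeat split; auto. intros k x Hk; lia.
  - destruct (classic (exists y, U y /\ Df K y)) as [[y [HyU HyK]]|Hn].
    + (* shrink [U] to a neighbourhood of [y] that [f K] moves off itself *)
      set (r := d y (f K y) / 2).
      assert (Hr : 0 < r).
      { pose proof (dist_pos y (f K y) (not_eq_sym (Hfix K y HyK))). unfold r. lra. }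
      exists (fun x => (U x /\ d y x < r) /\ (Df K x /\ d (f K y) (f K x) < r)).
      split; [|split; [|split]].
      * apply (open_inter O HT); [apply (open_inter O HT); [auto|apply ball_open]|].
        apply (Hfc K (fun z => d (f K y) z < r)), ball_open.
      * exists y. rewrite !dist_refl. repeat split; auto.
      * intros x [[Hx _] _]; auto.
      * intros k x Hk [[HxU Hx1] [HxK Hx2]] HxD [[Hf1 Hf2] [Hf3 Hf4]].
        destruct (Nat.eq_dec k K) as [->|Hne].
        -- pose proof (d_tri y (f K x) (f K y)). rewrite (d_sym (f K x) (f K y)) in *.
           unfold r in *. lra.
        -- apply (HUk k x); auto. lia.
    + exists U. repeat split; eauto.
      intros k x Hk Hx HD. destruct (Nat.eq_dec k K) as [->|Hne].
      * exfalso; apply Hn; eauto.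
      * apply HUk; auto. lia.
Qed.

Lemma graph_has_triangle (x0 : X) :
  exists m n x, (m < n)%nat /\ Df n x /\ Df m (f n x) /\ Df m x.
Proof.
  pose proof metric_topology as HT.
  destruct (Hclos x0 _ _ (open_full O HT) (open_full O HT) I I)
    as (a0 & a1 & _ & _ & [m [Hm0 _]]).
  destruct (open_off_graph m (S m)) as (U & HU & [u Hu] & HUm & HUk); eauto.
  destruct (Hclos u U U HU HU Hu Hu) as (a & a' & Ha & Ha' & [n [Hn Hfn]]).
  exists m, n, a. subst a'.
  destruct (le_lt_dec n m) as [Hle|Hlt]; [exfalso; apply (HUk n a); auto; lia|].
  repeat split; auto.
Qed.

Section FromCantor.
Variables (t : nat -> list bool) (b : bool).
Hypotheses (Htl : forall n, length (t n) = n) (Htd : forall u, exists n w, t n = u ++ w).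
Variable h : cantor -> X.
Hypotheses (Hh : Borel_map cantor_open O h) (Hinj : forall x y, h x = h y -> x = y)
  (Hedge : forall n x, has_prefix (t n ++ b :: nil) x ->
      exists i, Df i (h x) /\ f i (h x) = h (flip n x)).

Definition first_edge (j : nat) (x : cantor) : Prop :=
  (x 0%nat = b /\ Df j (h x)) /\ f j (h x) = h (flip 0 x).

Lemma first_edge_Borel j : Borel cantor_open (first_edge j).
Proof.
  pose proof cantor_topology as HC.
  assert (Hb0 : cantor_open (fun x : cantor => x 0%nat = b)).
  { intros x Hx. exists 1%nat. intros y Hy. rewrite Hy; auto. }
  apply (Borel_equalizer cantor_open HC).
  - apply Borel_inter; auto; [apply Borel_open; auto|apply (Hh (Df j)), Borel_open; auto].
  - intros V HV. apply Borel_ext with (fun y : cantor => y 0%nat = b /\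
       (fun z => Df j z /\ V (f j z)) (h y)).
    + intros y; simpl; tauto.
    + apply Borel_inter; auto; [apply Borel_open; auto|].
      apply (Hh (fun z => Df j z /\ V (f j z))), Borel_open; auto.
  - intros V HV. apply (flip_Borel 0 (fun z => V (h z))), Hh, Borel_open; auto.
Qed.

Lemma edge_of_large_index x j lv : NoDup lv -> (S j < length lv)%nat ->
  (forall n, In n lv -> has_prefix (t n ++ b :: nil) x) ->
  exists n i, In n lv /\ (j < i)%nat /\ Df i (h x) /\ f i (h x) = h (flip n x).
Proof.
  intros Hnd Hlen Hpre.
  destruct (choice (fun n i => In n lv -> Df i (h x) /\ f i (h x) = h (flip n x))) as [I HI].
  { intros n. destruct (classic (In n lv)) as [Hin|Hin].
    - destruct (Hedge n x (Hpre n Hin)) as [i Hi]. eauto.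
    - exists 0%nat. tauto. }
  destruct (pigeonhole_large_value I lv j) as [n [Hin Hjn]]; auto.
  { intros a c Ha Hc HIac. apply (flip_index_inj a c x), Hinj.
    rewrite <- (proj2 (HI a Ha)), <- (proj2 (HI c Hc)), HIac. auto. }
  exists n, (I n). destruct (HI n Hin). auto.
Qed.

Lemma no_homomorphism_from_cantor : False.
Proof.
  pose proof cantor_topology as HC.
  assert (Hb0 : cantor_open (fun x : cantor => x 0%nat = b)).
  { intros x Hx. exists 1%nat. intros y Hy. rewrite Hy; auto. }
  destruct (baire_cover cantor_open HC (fun x => x 0%nat = b) first_edge cantor_baire Hb0)
    as (j & W & HW & [p Hp] & _ & HM).
  { exists (fun _ => b). auto. }
  { intros n. apply Borel_baire_property, first_edge_Borel; auto. }
  { intros x Hx. destruct (Hedge 0%nat x) as [i Hi]; [|exists i; split; tauto].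
    intros i Hi. pose proof (Htl 0%nat) as Ht0. destruct (t 0%nat); [|discriminate].
    destruct i; [auto|simpl in Hi; lia]. }
  destruct (HW p Hp) as [NW HNW].
  set (L := max NW 1).
  destruct (extend_through_levels t b Htl Htd (S (S j)) (map p (seq 0 L)))
    as (v' & lv & [w Hw] & Hlen & Hnd & Hlv).
  rewrite length_map, length_seq in Hlv.
  (* a generic point of the cylinder [v'] stays in [first_edge j] after flipping any digit *)
  assert (HMM : meager cantor_open (fun x => (W x /\ ~ first_edge j x) \/
                   exists n, W (flip n x) /\ ~ first_edge j (flip n x))).
  { apply meager_union2; auto. apply meager_countable_union. intros n.
    apply (flip_meager n (fun x => W x /\ ~ first_edge j x)); auto. }
  destruct (cantor_baire _ _ HMM (has_prefix_open v') (has_prefix_nonempty v'))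
    as [x [Hxv HxM]].
  assert (HxL : cylinder p L x).
  { apply has_prefix_cylinder. subst v'. eapply has_prefix_app; eauto. }
  assert (HWx : W x) by (apply HNW; intros i Hi; apply HxL; lia).
  assert (HEx : first_edge j x) by (apply NNPP; intros Hn; apply HxM; left; auto).
  assert (Hlev : forall n, In n lv -> has_prefix (t n ++ b :: nil) x /\ first_edge j (flip n x)).
  { intros n Hin. destruct (Hlv n Hin) as [Hle [w' Hw']]. split.
    - apply has_prefix_app with w'. rewrite <- app_assoc. simpl. rewrite <- Hw'. auto.
    - apply NNPP. intros Hn. apply HxM. right. exists n. split; auto.
      apply HNW. intros i Hi. unfold flip. destruct (Nat.eqb_spec i n); [lia|apply HxL; lia]. }
  destruct (edge_of_large_index x j lv) as (n & i & Hin & Hji & HDi & Hfi); auto.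
  { rewrite Hlen. lia. }
  { intros n Hin. apply Hlev; auto. }
  destruct HEx as [[_ HDj] Hfj]. destruct (proj2 (Hlev n Hin)) as [[_ HDj'] Hfj'].
  assert (Heq := Hhyp j i (h x) Hji HDi ltac:(rewrite Hfi; auto) HDj).
  rewrite Hfi, Hfj', Hfj in Heq. apply Hinj, flip_inj in Heq.
  apply (flip_neq n x), Heq.
Qed.

End FromCantor.

Definition reach (V : X -> Prop) (k : nat) (x : X) : Prop :=
  exists c q, radius q <= / (INR k + 1) /\ basic q x /\
    exists y, (V y /\ basic q y /\ Df c y) /\ f c y = x.

Lemma reach_open V k : O V -> O (reach V k).
Proof.
  intros HV. pose proof metric_topology as HT.
  apply (open_countable_union O HT (fun c x => exists q, _)); intros c.
  apply (open_countable_union O HT (fun q x => _)); intros q.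
  destruct (classic (radius q <= / (INR k + 1))) as [Hr|Hr].
  - apply (open_ext O _ _ (open_inter O HT _ _ (basic_open q)
             (Hfo c (fun y => V y /\ basic q y) (open_inter O HT _ _ HV (basic_open q))))).
    intros x; split.
    + intros [H1 (y & H2 & [H3 H4] & H5)]. split; auto. split; auto. exists y. tauto.
    + intros (_ & H1 & y & [H2 [H3 H4]] & H5). split; auto. exists y. tauto.
  - apply (open_ext O _ _ (open_empty O HT)). intros x; split; [tauto|]. intros [Hc _]; auto.
Qed.

(** Around any point of [V], the closure of the graph near the diagonal yields
   edges [a -> a'] inside a small basic ball. *)
Lemma reach_dense V k : O V -> nowhere_dense O (fun x => V x /\ ~ reach V k x).
Proof.
  intros HV U HU [u Hu]. pose proof metric_topology as HT.
  destruct (classic (exists y0, U y0 /\ V y0)) as [[y0 [Hy0U Hy0V]]|Hn].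
  - destruct (open_has_ball _ y0 (open_inter O HT _ _ HU HV)) as [rho [Hrho Hb]]; auto.
    pose proof (inv_succ_pos k).
    destruct (basic_around y0 (Rmin (rho / 2) (/ (INR k + 1)))) as (q & Hq & Hr).
    { apply Rmin_pos; lra. }
    pose proof (Rmin_l (rho / 2) (/ (INR k + 1))). pose proof (Rmin_r (rho / 2) (/ (INR k + 1))).
    assert (Hqs : forall y, basic q y -> U y /\ V y).
    { intros y Hy. apply Hb. pose proof (basic_diameter q y0 y Hq Hy). lra. }
    destruct (Hclos y0 (basic q) (basic q) (basic_open q) (basic_open q) Hq Hq)
      as (a & a' & Ha & Ha' & [c [Hca Hfa]]).
    exists (fun x => U x /\ reach V k x). repeat split.
    + apply open_inter, reach_open; auto.
    + exists a'. split; [apply Hqs; auto|]. exists c, q. split; [lra|split; auto].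
      exists a. split; auto. split; [apply Hqs; auto|auto].
    + intros x [Hx _]; auto.
    + intros x [_ Hx] [_ Hx']. auto.
  - exists U. repeat split; eauto. intros y Hy [Hy' _]. apply Hn; eauto.
Qed.

Lemma generic_point_with_close_preimages (V Z : X -> Prop) :
  O V -> (exists x, V x) -> meager O (fun x => V x /\ ~ Z x) ->
  exists x, Z x /\
    forall eps, 0 < eps -> exists c y, Z y /\ Df c y /\ f c y = x /\ d x y < eps.
Proof.
  intros HV Hne HZ. pose proof metric_topology as HT.
  set (Src := fun c q y => V y /\ basic q y /\ Df c y).
  set (Miss := fun k x => exists c q, radius q <= / (INR k + 1) /\ basic q x /\
     (exists y, Src c q y /\ f c y = x) /\ ~ exists y, (Src c q y /\ Z y) /\ f c y = x).
  assert (HMiss : forall k, meager O (Miss k)).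
  { intros k. apply meager_countable_union. intros c. apply meager_countable_union. intros q.
    eapply meager_sub.
    - apply (image_of_comeager (Df c) (f c) (Src c q) Z); [repeat split; auto| | |].
      + apply open_inter; auto. apply open_inter; auto. apply basic_open.
      + intros y [_ [_ Hy]]; auto.
      + eapply meager_sub; [apply HZ|]. intros y [[Hy _] Hn]. auto.
    - intros x (_ & _ & Hy & Hn). auto. }
  assert (HBad : meager O (fun x => (V x /\ ~ Z x) \/
                    exists k, (V x /\ ~ reach V k x) \/ Miss k x)).
  { apply meager_union2; auto. apply meager_countable_union. intros k.
    apply meager_union2; auto. apply nowhere_dense_meager, reach_dense; auto. }
  destruct (metric_baire _ _ HBad HV Hne) as [x [HxV HxB]].
  exists x. split; [apply NNPP; intros Hn; apply HxB; left; auto|].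
  intros eps Heps.
  destruct (exists_inv_succ_lt (eps / 2)) as [k Hk]; [lra|].
  destruct (classic (reach V k x)) as [(c & q & Hr & Hqx & Hy)|Hn];
    [|exfalso; apply HxB; right; exists k; left; auto].
  destruct (classic (exists y, (Src c q y /\ Z y) /\ f c y = x)) as [(y & [HSy HZy] & Hfy)|Hn];
    [|exfalso; apply HxB; right; exists k; right; exists c, q; auto].
  destruct HSy as (_ & Hqy & HDy).
  exists c, y. repeat split; auto. pose proof (basic_diameter q x y Hqx Hqy). lra.
Qed.

Section ToInverse.

Variable h : X -> X.
Hypotheses (Hh : Borel_map O O h) (Hinj : forall x y, h x = h y -> x = y)
  (Hrev : forall u v, graph_union Df f u v -> graph_union Df f (h v) (h u)).

Definition back_edge (b j : nat) (z : X) : Prop :=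
  (Df b z /\ Df j (h (f b z))) /\ f j (h (f b z)) = h z.

Lemma back_edge_Borel b j : Borel O (back_edge b j).
Proof.
  pose proof metric_topology as HT.
  apply (Borel_equalizer O HT).
  - apply (partial_preimage_Borel O O HT (Df b) (f b) (HDf b) (Hfc b) (fun y => Df j (h y))).
    apply (Hh (Df j)), Borel_open; auto.
  - intros V HV.
    apply Borel_ext with (fun y => Df b y /\ (fun w => Df j (h w) /\ V (f j (h w))) (f b y)).
    + intros y; simpl; tauto.
    + apply (partial_preimage_Borel O O HT (Df b) (f b) (HDf b) (Hfc b)
               (fun w => Df j (h w) /\ V (f j (h w)))).
      apply (Hh (fun z => Df j z /\ V (f j z))), Borel_open; auto.
  - intros V HV. apply Hh, Borel_open; auto.
Qed.

Lemma back_edge_target b : (exists z, Df b z) ->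
  exists j W C, O W /\ (exists w, W w) /\ (forall w, W w -> Df b w) /\
    (forall y eps, C y -> 0 < eps -> exists U, O U /\ U y /\
       forall z, C z -> U z -> d (h y) (h z) < eps) /\
    meager O (fun y => (exists w, W w /\ f b w = y) /\
                       ~ (C y /\ exists w, (W w /\ back_edge b j w) /\ f b w = y)).
Proof.
  intros Hb. pose proof metric_topology as HT.
  destruct (baire_cover O HT (Df b) (back_edge b) metric_baire (HDf b))
    as (j & W & HW & HWne & HWD & HM); auto.
  { intros n. apply Borel_baire_property, back_edge_Borel; auto. }
  { intros z Hz. destruct (Hrev z (f b z)) as [j [Hj1 Hj2]]; [exists b; auto|].
    exists j. split; auto. }
  destruct (Borel_map_continuous_on_comeager O HT h Hh) as (C & HCm & HCc).
  exists j, W, C. repeat split; auto.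
  assert (HMG : meager O (fun w => W w /\ ~ (back_edge b j w /\ C (f b w)))).
  { eapply meager_sub.
    - apply meager_union2; [apply HM|].
      apply (meager_preimage (Df b) (f b) (fun y => ~ C y)); [repeat split; auto|auto].
    - intros w [Hw HnG]. pose proof (HWD w Hw).
      destruct (classic (back_edge b j w)); [right|left]; tauto. }
  eapply meager_sub.
  - apply (image_of_comeager (Df b) (f b) W (fun w => back_edge b j w /\ C (f b w)));
      [repeat split; auto|auto|auto|exact HMG].
  - intros y [Hy Hn]. split; auto. intros (w & [Hw [HE HC]] & Hfw). apply Hn.
    split; [subst; auto|exists w; auto].
Qed.

Lemma no_reduction_to_inverse (x0 : X) : False.
Proof.
  pose proof metric_topology as HT.
  destruct (Hclos x0 _ _ (open_full O HT) (open_full O HT) I I)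
    as (a0 & a1 & _ & _ & [b [Hb0 _]]).
  destruct (back_edge_target b) as (j & W & C & HW & HWne & HWD & HCc & HZ); eauto.
  destruct (generic_point_with_close_preimages (fun y => exists w, W w /\ f b w = y)
    (fun y => C y /\ exists w, (W w /\ back_edge b j w) /\ f b w = y)) as (x & [HxC Hx] & Hclose).
  { apply (open_ext O _ _ (Hfo b W HW)). intros y; split.
    - intros (w & _ & H1 & H2). eauto.
    - intros (w & H1 & H2). exists w; auto. }
  { destruct HWne as [w Hw]. exists (f b w), w. auto. }
  { exact HZ. }
  destruct Hx as (z & [_ [[_ HDjx] Hfjx]] & Hfz). rewrite Hfz in HDjx, Hfjx.
  (* [rho] separates [h x] from its images under the maps of index [<= j] *)
  destruct (finite_positive_lower_bound (fun i => Df i (h x)) (fun i => d (h x) (f i (h x)))) with j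
    as [rho [Hrho Hrho2]].
  { intros i Hi. apply dist_pos. intros He. apply (Hfix i (h x) Hi). auto. }
  destruct (HCc x rho HxC Hrho) as (U & HU & HUx & HUc).
  destruct (open_has_ball U x HU HUx) as [delta [Hdelta Hdb]].
  destruct (Hclose delta Hdelta) as (c & y & [HyC HyZ] & HDcy & Hfy & Hdxy).
  destruct (Hrev y x) as [i [Hi1 Hi2]]; [exists c; auto|].
  assert (Hji : (j < i)%nat).
  { destruct (le_lt_dec i j) as [Hle|]; auto. exfalso.
    pose proof (Hrho2 i Hle Hi1). pose proof (HUc y HyC (Hdb y Hdxy)). rewrite Hi2 in *. lra. }
  destruct HyZ as (w & [_ [[_ HDjw] Hfjw]] & Hfw). rewrite Hfw in HDjw, Hfjw.
  assert (Heq := Hhyp j i (h x) Hji Hi1 ltac:(rewrite Hi2; auto) HDjx).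
  rewrite Hi2, Hfjw, Hfjx in Heq. apply Hinj in Heq. subst w.
  rewrite Hfz in Hfw. subst y. apply (Hfix c x HDcy Hfy).
Qed.

End ToInverse.
End PartialMaps.
End Metric.

(** * The sequences [s_n] and the graph [G0] *)

Definition num (u : list bool) : nat :=
  fold_left (fun acc (c : bool) => (2 * acc + Nat.b2n c)%nat) u 1%nat.

Lemma num_snoc u c : num (u ++ c :: nil) = (2 * num u + Nat.b2n c)%nat.
Proof. unfold num. rewrite fold_left_app. reflexivity. Qed.

Lemma num_spec u : (0 < num u)%nat /\ Nat.log2 (num u) = length u /\
  forall i, (i < length u)%nat -> Nat.testbit (num u) (length u - 1 - i) = nth i u false.
Proof.
  induction u as [|c u IH] using rev_ind.
  - unfold num; simpl. split; [lia|split; auto]. intros i Hi; simpl in Hi; lia.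
  - destruct IH as (H0 & H1 & H2). rewrite num_snoc, length_app. cbn [length].
    split; [lia|split].
    + destruct c; cbn [Nat.b2n].
      * rewrite Nat.log2_succ_double; auto. lia.
      * rewrite Nat.add_0_r, Nat.log2_double; auto. lia.
    + intros i Hi. destruct (Nat.eq_dec i (length u)) as [->|Hne].
      * replace (length u + 1 - 1 - length u)%nat with 0%nat by lia.
        rewrite nth_middle. destruct c; cbn [Nat.b2n].
        -- apply Nat.testbit_odd_0.
        -- rewrite Nat.add_0_r. apply Nat.testbit_even_0.
      * replace (length u + 1 - 1 - i)%nat with (S (length u - 1 - i)) by lia.
        rewrite app_nth1 by lia. rewrite <- H2 by lia.
        destruct c; cbn [Nat.b2n].
        -- apply Nat.testbit_odd_succ. lia.
        -- rewrite Nat.add_0_r. apply Nat.testbit_even_succ. lia.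
Qed.

Lemma psi_num u : psi (num u - 1) = u.
Proof.
  destruct (num_spec u) as (H0 & H1 & H2).
  unfold psi. replace (S (num u - 1)) with (num u) by lia. rewrite H1.
  apply nth_ext with (d := false) (d' := false).
  - rewrite length_map, length_seq. auto.
  - intros i Hi. rewrite length_map, length_seq in Hi.
    rewrite nth_map_seq by auto. apply H2; auto.
Qed.

Lemma s_seq_length n : length (s_seq n) = n.
Proof.
  unfold s_seq, psi. rewrite length_app, repeat_length, length_map, length_seq.
  pose proof (Nat.log2_lt_lin (S n)). lia.
Qed.

Lemma s_seq_extends u : exists n w, s_seq n = u ++ w.
Proof. exists (num u - 1)%nat. unfold s_seq. rewrite psi_num. eauto. Qed.

Lemma concat_seq_flip n b x : has_prefix (s_seq n ++ b :: nil) x ->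
  x = concat_seq (s_seq n) b (fun i => x (i + S n)%nat) /\
  flip n x = concat_seq (s_seq n) (negb b) (fun i => x (i + S n)%nat).
Proof.
  intros H. pose proof (s_seq_length n) as Hl.
  assert (Hlt : forall i, (i < n)%nat -> x i = nth i (s_seq n) false).
  { intros i Hi. rewrite H by (rewrite length_app; simpl; lia). rewrite app_nth1; auto. lia. }
  assert (Hn : x n = b).
  { rewrite H by (rewrite length_app; simpl; lia). rewrite <- Hl at 1. rewrite nth_middle. auto. }
  split; apply functional_extensionality; intros i; unfold concat_seq, flip; rewrite Hl;
    destruct (Nat.ltb_spec i n); destruct (Nat.eqb_spec i n); try lia.
  - apply Hlt; auto.
  - subst i; auto.
  - f_equal; lia.
  - apply Hlt; auto.
  - subst i; rewrite Hn; auto.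
  - f_equal; lia.
Qed.

Lemma G0_flip n x : has_prefix (s_seq n ++ false :: nil) x -> G0 x (flip n x).
Proof.
  intros H. destruct (concat_seq_flip n false x H) as [E1 E2].
  exists n, (fun i => x (i + S n)%nat). auto.
Qed.

Lemma G0_flip_rev n x : has_prefix (s_seq n ++ true :: nil) x -> G0 (flip n x) x.
Proof.
  intros H. destruct (concat_seq_flip n true x H) as [E1 E2].
  exists n, (fun i => x (i + S n)%nat). auto.
Qed.

Definition differ_in_one_digit (x y : cantor) : Prop :=
  exists p, x p <> y p /\ forall q, q <> p -> x q = y q.

Lemma G0_differ_in_one_digit x y : G0 x y \/ G0 y x -> differ_in_one_digit x y.
Proof.
  intros [(n & g & -> & ->)|(n & g & -> & ->)]; exists (length (s_seq n));
    unfold concat_seq; rewrite Nat.ltb_irrefl, Nat.eqb_refl; (split; [discriminate|]);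
    intros q Hq; apply Nat.eqb_neq in Hq; rewrite Hq; auto.
Qed.

Lemma G0_no_triangle a b c :
  G0 a b \/ G0 b a -> G0 b c \/ G0 c b -> G0 a c \/ G0 c a -> False.
Proof.
  intros Hab Hbc Hac.
  destruct (G0_differ_in_one_digit _ _ Hab) as [p1 [H1 H1']].
  destruct (G0_differ_in_one_digit _ _ Hbc) as [p2 [H2 H2']].
  destruct (G0_differ_in_one_digit _ _ Hac) as [p3 [H3 H3']].
  destruct (Nat.eq_dec p3 p1) as [->|N31].
  - destruct (Nat.eq_dec p2 p1) as [->|N21].
    + destruct (a p1), (b p1), (c p1); congruence.
    + apply H2. rewrite <- (H1' p2 N21). apply H3'. auto.
  - destruct (Nat.eq_dec p3 p2) as [->|N32].
    + apply H1. rewrite (H3' p1) by auto. symmetry. apply H2'. auto.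
    + apply H3. rewrite H1' by auto. apply H2'. auto.
Qed.

Theorem corollary2p4 (X : Type) (O : (X -> Prop) -> Prop)
  (D : nat -> X -> Prop) (f : nat -> X -> X) :
  complex_situation O D f ->
  (forall m n x, (m < n)%nat -> D n x -> D m (f n x) -> D m x ->
     f m (f n x) = f m x) ->
  let A := graph_union D f in
  ~ inj_Borel_le cantor_open G0 O A /\
  ~ inj_Borel_le O A cantor_open G0 /\
  ~ inj_Borel_le cantor_open G0 O (inv_rel A) /\
  ~ inj_Borel_le O (inv_rel A) cantor_open G0 /\
  ~ inj_Borel_le O A O (inv_rel A) /\
  ~ inj_Borel_le O (inv_rel A) O A.
Proof.
  intros Hcs Hhyp A.
  destruct Hcs as (HP & [x0] & HD & _ & Hfc & Hfo & Hdiag).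
  destruct HP as (d & d_nonneg & d_zero & d_sym & d_tri & d_open & d_complete & [Dn d_dense]).
  assert (Hfix : forall n x, D n x -> f n x <> x).
  { intros n x Hx He. apply (proj2 (Hdiag x)). exists n; auto. }
  assert (Hclos : forall x, closure2 O A x x) by apply Hdiag.
  destruct (graph_has_triangle O d d_nonneg d_zero d_sym d_tri d_open D f HD Hfc Hfix Hclos x0)
    as (m & n & x & Hmn & Hn & Hm1 & Hm2).
  assert (Axy : A x (f n x)) by (exists n; auto).
  assert (Ayz : A (f n x) (f m x)) by (exists m; rewrite (Hhyp m n x); auto).
  assert (Axz : A x (f m x)) by (exists m; auto).
  split; [|split; [|split; [|split; [|split]]]]; intros (h & Hh & Hinj & Hhom).
  - eapply (no_homomorphism_from_cantor O d) with (b := false) (h := h); eauto.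
    + apply s_seq_length.
    + apply s_seq_extends.
    + intros k z Hz. apply Hhom, G0_flip, Hz.
  - apply (G0_no_triangle (h x) (h (f n x)) (h (f m x))); left; apply Hhom; auto.
  - eapply (no_homomorphism_from_cantor O d) with (b := true) (h := h); eauto.
    + apply s_seq_length.
    + apply s_seq_extends.
    + intros k z Hz. apply (Hhom (flip k z) z), G0_flip_rev, Hz.
  - apply (G0_no_triangle (h x) (h (f n x)) (h (f m x))); right; apply Hhom; auto.
  - eapply (no_reduction_to_inverse O d) with (f := f) (h := h); eauto.
  - eapply (no_reduction_to_inverse O d) with (f := f) (h := h); eauto.
    intros u v Huv. apply (Hhom v u), Huv.
Qed.
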